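(* Let $V$ satisfy (C1)–(C4), let $\mathbb P(A):=V_A(1_\Omega)$, and for each $q\in\mathbb Q$ let $u(\cdot,q)\in\mathcal L^1(\Omega,\mathcal F,\mathbb P)$ be a version of the Radon–Nikodym derivative $d\mu_q/d\mathbb P$, where $\mu_q(A):=V_A(q)$ (which is absolutely continuous with respect to $\mathbb P$), chosen with $u(\omega,0)=0$ for all $\omega$. Define $$A^{\mathbb Q}:=\{\omega: u(\omega,q_1)<u(\omega,q_2)\ \forall q_1<q_2\in\mathbb Q\},\qquad B^{\mathbb Q}:=\{\omega: u(\omega,q)=\inf_{\tilde q\in\mathbb Q,\tilde q>q}u(\omega,\tilde q)\ \forall q\in\mathbb Q\}.$$ Then $A^{\mathbb Q},B^{\mathbb Q}\in\mathcal F$ and $\mathbb P(A^{\mathbb Q})=\mathbb P(B^{\mathbb Q})=1$.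
   Context: $\mathcal L^\infty(\Omega,\mathcal F)$: bounded $\mathcal F$-measurable real functions; $V:\mathcal F\times\mathcal L^\infty(\Omega,\mathcal F)\to\mathbb R$, $(A,f)\mapsto V_A(f)$. (C1) for every $f$, $A\mapsto V_A(f)$ is a finite signed measure, $V_A(0)=0$, and $A\mapsto V_A(1_\Omega)$ is a probability measure; (C2) $V_A(f)=V_\Omega(f1_A)$; (C3) $f\le g$ pointwise implies $V_A(f)\le V_A(g)$ for all $A$, and $\mathbb P(A)>0$ implies $V_A(x)<V_A(y)$ for real $x<y$; (C4) for every $A$, $V_A(f_n)\to V_A(f)$ whenever $(f_n)$ is uniformly bounded and converges pointwise everywhere to $f$. *)

From HB Require Import structures.
From mathcomp Require Import all_boot all_order all_algebra.
From mathcomp Require Import all_classical all_reals all_analysis.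
Set Implicit Arguments. Unset Strict Implicit. Unset Printing Implicit Defensive.
Import Order.TTheory GRing.Theory Num.Theory.
Import numFieldNormedType.Exports.
Local Open Scope classical_set_scope.
Local Open Scope ring_scope.

Section Defs.
Context (d : measure_display) (Omega : measurableType d) (R : realType).

Definition bmeas (f : Omega -> R) : Prop :=
  measurable_fun setT f /\ exists M : R, forall x, `|f x| <= M.

(* V : F x L^oo -> R, represented as a total function; conditions only
   constrain it on measurable sets and bounded measurable functions. *)
Definition C1 (V : set Omega -> (Omega -> R) -> R) : Prop :=
  (forall f, bmeas f ->
     V set0 f = 0 /\
     forall F : nat -> set Omega, (forall n, measurable (F n)) ->
       trivIset setT F ->
       (fun n => \sum_(0 <= i < n) V (F i) f) @ \oo --> V (\bigcup_n F n) f) /\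
  (forall A, measurable A -> V A (fun _ => 0) = 0) /\
  (forall A, measurable A -> 0 <= V A (fun _ => 1)) /\
  V setT (fun _ => 1) = 1.

Definition C2 (V : set Omega -> (Omega -> R) -> R) : Prop :=
  forall A f, measurable A -> bmeas f ->
    V A f = V setT (fun x => f x * \1_A x).

Definition C3 (V : set Omega -> (Omega -> R) -> R) : Prop :=
  (forall A f g, measurable A -> bmeas f -> bmeas g ->
     (forall x, f x <= g x) -> V A f <= V A g) /\
  (forall A (x y : R), measurable A -> 0 < V A (fun _ => 1) -> x < y ->
     V A (fun _ => x) < V A (fun _ => y)).

Definition C4 (V : set Omega -> (Omega -> R) -> R) : Prop :=
  forall A (fn : nat -> Omega -> R) (f : Omega -> R), measurable A ->
    (forall n, bmeas (fn n)) -> bmeas f ->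
    (exists M : R, forall n x, `|fn n x| <= M) ->
    (forall x, (fun n => fn n x) @ \oo --> f x) ->
    (fun n => V A (fn n)) @ \oo --> V A f.

Definition AQ (u : Omega -> rat -> R) : set Omega :=
  [set w | forall q1 q2 : rat, q1 < q2 -> u w q1 < u w q2].

Definition BQ (u : Omega -> rat -> R) : set Omega :=
  [set w | forall q : rat,
     (u w q)%:E = ereal_inf [set (u w q')%:E | q' in [set q' : rat | q < q']]].

End Defs.

(* By the integral representation, V_A(q2) - V_A(q1) is the integral of
   u(., q2) - u(., q1) over A.  On A = {u(., q2) <= u(., q1)} with q1 < q2 it is
   therefore <= 0, which contradicts the strict monotonicity of C3 unless
   P(A) = 0.  On A = {u(., q) + c <= u(., q + 1/(n+1)) for all n} with c > 0 it
   is >= c P(A) along the sequence q + 1/(n+1), whereas C4 makes q |-> V_A(q)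
   right-continuous; so again P(A) = 0.  Countably many such null sets cover the
   complements of A^Q and B^Q, and both sets are countable Boolean combinations
   of measurable comparison sets. *)

From HB Require Import structures.
From mathcomp Require Import all_boot all_order all_algebra.
From mathcomp Require Import all_classical all_reals all_analysis.
From mathcomp Require Import measurable_realfun.
Set Implicit Arguments. Unset Strict Implicit.
Unset Printing Implicit Defensive.
Import Order.TTheory GRing.Theory Num.Theory.
Import numFieldNormedType.Exports.
Local Open Scope classical_set_scope.
Local Open Scope ring_scope.

Section countable_index.
Context d (T : measurableType d) (I : countType).

Lemma countable_bigcapT_measurable (F : I -> set T) :
  (forall i, measurable (F i)) -> measurable (\bigcap_i F i).
Proof.
move=> mF; rewrite -[X in measurable X]setCK setC_bigcap; apply: measurableC.
by apply: countable_bigcupT_measurable => [|i];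
  [exact: countableP | exact/measurableC].
Qed.

Lemma negligible_countable_bigcup (R : realFieldType)
    (mu : {measure set T -> \bar R}) (F : I -> set T) :
  (forall i, mu.-negligible (F i)) -> mu.-negligible (\bigcup_i F i).
Proof.
move=> nF; pose G n := if @unpickle I n is Some i then F i else set0.
apply: (negligibleS _ (negligible_bigcup (F := G) _)).
  by move=> w [i _ Fiw]; exists (pickle i) => //; rewrite /G pickleK.
by move=> n; rewrite /G; case: unpickle => [i|];
  [exact: nF | exact: negligible_set0].
Qed.

End countable_index.

Section measurable_sets.
Context d (T : measurableType d).

Lemma measurable_propI (b : Prop) (A : set T) : measurable A ->
  measurable [set x | b /\ A x].
Proof.
have [hb|hb] := pselect b => mA.
  by rewrite (_ : [set x | _] = A) //; apply/seteqP; split=> x //= [].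
by rewrite (_ : [set x | _] = set0) //; apply/seteqP; split=> x //= [].
Qed.

Lemma measurable_propT (b : Prop) (A : set T) : measurable A ->
  measurable [set x | b -> A x].
Proof.
move=> mA; rewrite (_ : [set x | _] = ~` [set x | b /\ (~` A) x]).
  exact/measurableC/measurable_propI/measurableC.
apply/seteqP; split=> x /= h; first by move=> [/h].
by move=> hb; apply: contrapT => nAx; exact: h.
Qed.

Context (R : realType).
Implicit Types f g : T -> R.

Lemma measurable_set_ler f g :
  measurable_fun setT f -> measurable_fun setT g ->
  measurable [set x | f x <= g x].
Proof.
by move=> mf mg; rewrite -[X in measurable X]setTI; exact: measurable_fun_le.
Qed.

Lemma measurable_set_ltr f g :
  measurable_fun setT f -> measurable_fun setT g ->
  measurable [set x | f x < g x].
Proof.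
move=> mf mg; rewrite (_ : [set x | _] = ~` [set x | g x <= f x]).
  exact/measurableC/measurable_set_ler.
by apply/seteqP; split=> x /=; rewrite ltNge => /negP.
Qed.

End measurable_sets.

Lemma probability_eq1 d (T : measurableType d) (R : realType)
    (P : probability T R) (B : set T) :
  measurable B -> P.-negligible (~` B) -> P B = 1%E.
Proof.
move=> mB [N [mN PN0 BN]]; apply/le_anti/andP.
split; first exact: probability_le1.
have := probability_setC P mN; rewrite PN0 sube0 => <-.
by apply: le_measure; rewrite ?inE //; [exact: measurableC | exact: subsetCl].
Qed.

Lemma ereal_inf_EFin_imageP (R : realType) (T : Type) (f : T -> R) (S : set T)
    (r : R) :
  r%:E = ereal_inf [set (f x)%:E | x in S] <->
  (forall x, S x -> r <= f x) /\
  (forall k : nat, exists x, S x /\ f x < r + k.+1%:R^-1).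
Proof.
split=> [rE|[lb approx]].
  split=> [x Sx|k].
    by rewrite -lee_fin rE; apply: ereal_inf_lbound; exists x.
  have : (ereal_inf [set (f x)%:E | x in S] < (r + k.+1%:R^-1)%:E)%E.
    by rewrite -rE lte_fin ltrDl invr_gt0.
  by move=> /ereal_inf_lt [_ [x Sx <-]]; rewrite lte_fin => fxr; exists x.
apply/le_anti/andP; split.
  by apply: le_ereal_inf_tmp => _ [x Sx <-]; rewrite lee_fin; exact: lb.
apply/lee_addgt0Pr => e e0.
have [k ke] := ltr_add_invr (x := e) (y := 0) ltac:(by rewrite e0).
have [x [Sx fxr]] := approx k.
apply: (@le_trans _ _ (f x)%:E); first by apply: ereal_inf_lbound; exists x.
rewrite -EFinD lee_fin (le_trans (ltW fxr)) // lerD2l.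
by rewrite add0r in ke; exact: ltW.
Qed.

Lemma bmeas_cst d (T : measurableType d) (R : realType) (r : R) :
  bmeas (fun _ : T => r).
Proof. by split; [exact: measurable_cst | exists `|r|]. Qed.

Section rational_utility.
Context d (Omega : measurableType d) (R : realType).
Variables (P : probability Omega R) (V : set Omega -> (Omega -> R) -> R)
  (u : Omega -> rat -> R).
Hypotheses (hP : forall A, measurable A -> P A = (V A (fun _ => 1))%:E)
  (hu : forall q : rat, measurable_fun setT (fun w => u w q) /\
     P.-integrable setT (fun w => (u w q)%:E) /\
     forall A, measurable A ->
       (V A (fun _ => ratr q))%:E = (\int[P]_(w in A) (u w q)%:E)%E).

Let measurable_u q : measurable_fun setT (fun w => u w q).
Proof. by case: (hu q). Qed.

Let integrable_u q A : measurable A -> P.-integrable A (fun w => (u w q)%:E).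
Proof. by move=> mA; case: (hu q) => _ [iu _]; exact: integrableS iu. Qed.

Let V_ratE q A : measurable A ->
  (V A (fun _ => ratr q))%:E = (\int[P]_(w in A) (u w q)%:E)%E.
Proof. by case: (hu q) => _ [_]; apply. Qed.

Lemma V_rat_leD q1 q2 (c : R) A : measurable A ->
    (forall w, A w -> u w q1 + c <= u w q2) ->
  V A (fun _ => ratr q1) + c * V A (fun _ => 1) <= V A (fun _ => ratr q2).
Proof.
move=> mA le12; rewrite -lee_fin EFinD EFinM -hP // !V_ratE //.
have icA : P.-integrable A (fun _ => c%:E).
  exact: finite_measure_integrable_cst.
rewrite -(integral_cst P mA c%:E) /= -integralD ?integrable_u //=.
apply: le_integral => //.
- exact: (integrableD mA (integrable_u q1 mA) icA).
- exact: integrable_u.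
- by move=> w /set_mem Aw; rewrite -EFinD lee_fin le12.
Qed.

Lemma P_eq0_of_V1_le0 A : measurable A -> V A (fun _ => 1) <= 0 -> P A = 0%E.
Proof.
move=> mA V1; apply/le_anti/andP.
by split; [rewrite hP // lee_fin | exact: measure_ge0].
Qed.

Lemma measurable_AQ : measurable (AQ u).
Proof.
rewrite (_ : AQ u = \bigcap_q1 \bigcap_q2 [set w | q1 < q2 -> u w q1 < u w q2]).
  do 2 apply: countable_bigcapT_measurable => ?.
  exact/measurable_propT/measurable_set_ltr.
by apply/seteqP; split=> w h q1 => [_ q2 _|q2]; [exact: h | exact: h q1 I q2 I].
Qed.

Lemma measurable_BQ : measurable (BQ u).
Proof.
rewrite (_ : BQ u = \bigcap_q
    (\bigcap_q' [set w | q < q' -> u w q <= u w q'] `&`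
     \bigcap_(k : nat) \bigcup_q'
       [set w | q < q' /\ u w q' < u w q + k.+1%:R^-1])).
  apply: countable_bigcapT_measurable => q; apply: measurableI.
    apply: countable_bigcapT_measurable => q'.
    exact/measurable_propT/measurable_set_ler.
  apply: bigcapT_measurable => k; apply: bigcupT_measurable_rat => q'.
  by apply/measurable_propI/measurable_set_ltr => //; exact: measurable_funD.
apply/seteqP; split=> w h q.
  have /ereal_inf_EFin_imageP[lb approx] := h q.
  by split=> [q' _|k _]; [exact: lb | have [q' ?] := approx k; exists q'].
have [lb approx] := h q I.
apply/ereal_inf_EFin_imageP; split=> [q'|k]; first exact: lb q' I.
by have [q' _ ?] := approx k I; exists q'.
Qed.

Section monotone_continuous.
Hypotheses (hV3 : C3 V) (hV4 : C4 V).

Lemma negligible_u_decrease q1 q2 : q1 < q2 ->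
  P.-negligible [set w | u w q2 <= u w q1].
Proof.
move=> q12; set A := [set w | _].
have mA : measurable A by exact: measurable_set_ler.
apply/negligibleP => //; apply: P_eq0_of_V1_le0 => //.
rewrite leNgt; apply/negP => V1.
have := hV3.2 A (ratr q1) (ratr q2) mA V1; rewrite ltr_rat => /(_ q12).
have : V A (fun _ => ratr q2) + 0 * V A (fun _ => 1) <= V A (fun _ => ratr q1).
  by apply: V_rat_leD => // w; rewrite addr0.
by rewrite mul0r addr0 leNgt => /negP.
Qed.

Lemma negligible_setC_AQ : P.-negligible (~` AQ u).
Proof.
apply: (negligibleS (A := \bigcup_(p : rat * rat)
  [set w | p.1 < p.2 /\ u w p.2 <= u w p.1])).
  apply: subsetCl => w nG q1 q2 q12; rewrite ltNge; apply/negP => le21.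
  by apply: nG; exists (q1, q2).
apply: negligible_countable_bigcup => -[q1 q2] /=.
have [q12|q21] := boolP (q1 < q2).
  by apply: (negligibleS _ (negligible_u_decrease q12)) => w [].
by apply: (negligibleS _ (negligible_set0 P)) => w [/negP].
Qed.

Lemma V_cst_cvg A (r : nat -> R) (l : R) : measurable A -> r @ \oo --> l ->
  (fun n => V A (fun _ => r n)) @ \oo --> V A (fun _ => l).
Proof.
move=> mA rl; apply: hV4 => //; [move=> n; exact: bmeas_cst|exact: bmeas_cst|].
have [M [_ rM]] := cvg_seq_bounded (cvgP _ rl).
by exists (M + 1) => n _; apply: rM => //; rewrite ltrDl.
Qed.

Lemma negligible_u_right_jump q (c : R) : 0 < c ->
  P.-negligible (\bigcap_n [set w | u w q + c <= u w (q + n.+1%:R^-1)]).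
Proof.
move=> c0; set A := \bigcap_n _.
have mA : measurable A.
  apply: bigcapT_measurable => n.
  by apply: measurable_set_ler => //; exact: measurable_funD.
apply/negligibleP => //; apply: P_eq0_of_V1_le0 => //.
have cvgV : (fun n => V A (fun _ => ratr (q + n.+1%:R^-1))) @ \oo
    --> V A (fun _ => ratr q).
  apply: V_cst_cvg => //; rewrite -[X in _ --> X]addr0.
  under eq_fun do rewrite rmorphD /= fmorphV /= rmorph_nat.
  exact: cvgD (cvg_cst _) cvg_harmonic.
have : V A (fun _ => ratr q) + c * V A (fun _ => 1) <= V A (fun _ => ratr q).
  rewrite -[leRHS](cvg_lim _ cvgV) //; apply: limr_ge (cvgP _ cvgV) (nearW _ _).
  by move=> n; apply: V_rat_leD => // w /(_ n I).
by rewrite gerDl pmulr_rle0.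
Qed.

Lemma negligible_setC_BQ : P.-negligible (~` BQ u).
Proof.
apply: (negligibleS (A := ~` AQ u `|` \bigcup_(p : rat * nat)
  \bigcap_n [set w | u w p.1 + p.2.+1%:R^-1 <= u w (p.1 + n.+1%:R^-1)])).
  apply: subsetCl => w /not_orP[/contrapT AQw nJw] q.
  apply/ereal_inf_EFin_imageP; split=> [q' qq'|k]; first exact/ltW/AQw.
  apply: contrapT => nex; apply: nJw; exists (q, k) => // n _ /=.
  rewrite leNgt; apply/negP => lt; apply: nex; exists (q + n.+1%:R^-1).
  by split; rewrite //= ltrDl invr_gt0.
apply: negligibleU; first exact: negligible_setC_AQ.
apply: negligible_countable_bigcup => -[q k].
by apply: negligible_u_right_jump; rewrite invr_gt0.
Qed.

End monotone_continuous.
End rational_utility.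

Theorem mainTheorem9 (d : measure_display) (Omega : measurableType d)
  (R : realType) (V : set Omega -> (Omega -> R) -> R)
  (P : probability Omega R) (u : Omega -> rat -> R) :
  C1 V -> C2 V -> C3 V -> C4 V ->
  (forall A, measurable A -> P A = (V A (fun _ => 1))%:E) ->
  (forall q : rat, measurable_fun setT (fun w => u w q) /\
     P.-integrable setT (fun w => (u w q)%:E) /\
     forall A, measurable A ->
       (V A (fun _ => ratr q))%:E = (\int[P]_(w in A) (u w q)%:E)%E) ->
  (forall w, u w 0 = 0) ->
  measurable (AQ u) /\ measurable (BQ u) /\ P (AQ u) = 1%E /\ P (BQ u) = 1%E.
Proof.
move=> _ _ hV3 hV4 hP hu _.
have mAQ := measurable_AQ hu; have mBQ := measurable_BQ hu.
split; [exact: mAQ | split; [exact: mBQ | split]].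
- exact: probability_eq1 mAQ (negligible_setC_AQ hP hu hV3).
- exact: probability_eq1 mBQ (negligible_setC_BQ hP hu hV3 hV4).
Qed.
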